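(* Let $\varphi:\mathrm{Mag}(A)\to\mathcal T^{pl}_A$ be the unique linear map with $\varphi(a)=\bullet_a$ for all $a\in A$ and $\varphi(\sigma\rhd\tau)=\varphi(\sigma)\curvearrowright\varphi(\tau)$ for all $\sigma,\tau\in\mathrm{Mag}(A)$. Then $\varphi$ is a linear isomorphism; hence the magmatic algebras $(\mathrm{Mag}(A),\rhd)$ and $(\mathcal T^{pl}_A,\curvearrowright)$ are isomorphic.
   Context: $A$ is a finite set and $\mathbf k$ a field of characteristic zero. $(\mathrm{Mag}(A),\rhd)$ is the free magmatic algebra on $A$ (the linear span of the free magma on $A$, with bilinear product $\rhd$ and no axioms). $T^{pl}_A$ is the set of planar rooted trees with vertices decorated by elements of $A$, $\bullet_a$ the one-vertex tree decorated by $a$, and $\mathcal T^{pl}_A$ the vector space with basis $T^{pl}_A$. The right Butcher product $\sigma\diamond\tau$ of two trees is the tree obtained by grafting the root of $\sigma$ onto the root of $\tau$ as its new rightmost child; every tree with at least two vertices is uniquely of the form $\tau_1\diamond\tau_2$. Left grafting $\curvearrowright:\mathcal T^{pl}_A\times\mathcal T^{pl}_A\to\mathcal T^{pl}_A$ is the bilinear product defined recursively by $\tau\curvearrowright\bullet_a:=\tau\diamond\bullet_a$ and $\tau\curvearrowright(\tau_1\diamond\tau_2):=(\tau\curvearrowright\tau_1)\diamond\tau_2+\tau_1\diamond(\tau\curvearrowright\tau_2)$ for trees $\tau,\tau_1,\tau_2$ (with $\diamond$ extended bilinearly). *)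

(* with multinomials' monoid algebra {malg k[K]} used as the
   k-vector space with basis K (finitely supported functions K -> k). *)
From HB Require Import structures.
From mathcomp Require Import all_boot all_order all_algebra.
From mathcomp Require Import finmap.
From mathcomp.multinomials Require Import monalg.

Set Implicit Arguments.
Unset Strict Implicit.
Unset Printing Implicit Defensive.

Import GRing.Theory.
Local Open Scope ring_scope.

Inductive magma (A : Type) : Type :=
| MGen  : A -> magma A
| MProd : magma A -> magma A -> magma A.
Arguments MGen {A} _.
Arguments MProd {A} _ _.

Inductive ptree (A : Type) : Type :=
| PNode : A -> seq (ptree A) -> ptree A.
Arguments PNode {A} _ _.

Section Countable.
Variable A : countType.

Fixpoint magma_enc (m : magma A) : GenTree.tree A :=
  match m with
  | MGen a => GenTree.Leaf a
  | MProd s t => GenTree.Node 0 [:: magma_enc s; magma_enc t]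
  end.
Fixpoint magma_dec (g : GenTree.tree A) : option (magma A) :=
  match g with
  | GenTree.Leaf a => Some (MGen a)
  | GenTree.Node _ [:: s; t] =>
      match magma_dec s, magma_dec t with
      | Some s', Some t' => Some (MProd s' t')
      | _, _ => None
      end
  | _ => None
  end.
Lemma magma_encK : pcancel magma_enc magma_dec.
Proof. by elim=> [a|s IHs t IHt] //=; rewrite IHs IHt. Qed.
HB.instance Definition _ := Countable.copy (magma A) (pcan_type magma_encK).

Fixpoint ptree_enc (t : ptree A) : GenTree.tree A :=
  match t with
  | PNode a cs => GenTree.Node 0 (GenTree.Leaf a :: map ptree_enc cs)
  end.
Fixpoint ptree_dec (g : GenTree.tree A) : option (ptree A) :=
  match g with
  | GenTree.Node _ (GenTree.Leaf a :: cs) =>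
      Some (PNode a (pmap ptree_dec cs))
  | _ => None
  end.
Lemma ptree_encK_aux : forall t, ptree_dec (ptree_enc t) = Some t.
Proof.
fix IH 1; move=> [a cs] /=; congr (Some (PNode a _)).
elim: cs => [|c cs IHcs] //=; by rewrite IH IHcs.
Qed.
Lemma ptree_encK : pcancel ptree_enc ptree_dec.
Proof. exact: ptree_encK_aux. Qed.
HB.instance Definition _ := Countable.copy (ptree A) (pcan_type ptree_encK).
End Countable.

Notation Mag k A := {malg k[magma A]}.
Notation Tpl k A := {malg k[ptree A]}.

Definition bilin (k : ringType) (K1 K2 : choiceType) (V : lmodType k)
    (f : K1 -> K2 -> V) (X : {malg k[K1]}) (Y : {malg k[K2]}) : V :=
  \sum_(m <- msupp X) \sum_(n <- msupp Y) (X@_m * Y@_n) *: f m n.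

Definition mag_prod (k : ringType) (A : countType) (X Y : Mag k A) : Mag k A :=
  bilin (fun s t => << MProd s t >>) X Y.

(* Right Butcher product on trees: sigma <> tau grafts the root of sigma
   onto the root of tau as its new rightmost child; extended bilinearly. *)
Definition tdiam (A : Type) (s t : ptree A) : ptree A :=
  let: PNode a cs := t in PNode a (rcons cs s).
Definition diam (k : ringType) (A : countType) (X Y : Tpl k A) : Tpl k A :=
  bilin (fun s t => << tdiam s t >>) X Y.

Fixpoint tsize (A : Type) (t : ptree A) : nat :=
  let: PNode _ cs := t in (sumn (map (@tsize A) cs)).+1.

(* Left grafting tau ~> rho on basis trees, following the recursion
     tau ~> .a            = tau <> .a
     tau ~> (t1 <> t2)    = (tau ~> t1) <> t2 + t1 <> (tau ~> t2),
   where a tree PNode a (rcons cs c) (>= 2 vertices) is c <> PNode a cs.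
   The extra nat argument is fuel (instantiated with the number of
   vertices of rho, which strictly decreases along the recursion). *)
Fixpoint graft_fuel (k : ringType) (A : countType) (n : nat)
    (tau rho : ptree A) : Tpl k A :=
  match n with
  | 0 => 0
  | n'.+1 =>
    match rho with
    | PNode a [::] => << tdiam tau (PNode a [::]) >>
    | PNode a (x :: xs) =>
        let c := last x xs in
        let r := PNode a (belast x xs) in
        diam (graft_fuel k n' tau c) << r >>
        + diam << c >> (graft_fuel k n' tau r)
    end
  end.

Definition graft_tree (k : ringType) (A : countType) (tau rho : ptree A)
  : Tpl k A := graft_fuel k (tsize rho) tau rho.

Definition graft (k : ringType) (A : countType) (X Y : Tpl k A) : Tpl k A :=
  bilin (@graft_tree k A) X Y.

(* phi is unitriangular with respect to the bases.  Let T(m) = [lead_tree m]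
   be the planar tree with T(a) = .a and T(s |> t) = T(s) grafted as the new
   leftmost child of the root of T(t); T is injective.  Grafting tau onto rho
   yields this root grafting plus trees with as many vertices whose root
   degree is that of rho.  By induction, phi(m) is T(m) plus trees with as
   many vertices and a lexicographically smaller preorder sequence of vertex
   degrees.  Injectivity follows by looking at the coefficient of a maximal
   leading tree, and surjectivity by induction on the number of vertices, then
   on the root degree. *)

From HB Require Import structures.
From mathcomp Require Import all_boot all_order all_algebra.
From mathcomp Require Import finmap zify.
From mathcomp.multinomials Require Import monalg.
(* Imported last, so that [tsize] is the number of vertices of a tree and not
   the size of a tuple. *)
Import Order.POrderTheory Order.TotalTheory GRing.Theory.
Local Open Scope ring_scope.

Set Implicit Arguments.
Unset Strict Implicit.
Unset Printing Implicit Defensive.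

Lemma ltxi_cat d (T : orderType d) (p q s t : seqlexi T) :
  size p = size q -> (p <= q)%O -> (p < q)%O || (s < t)%O ->
  (p ++ s < q ++ t :> seqlexi T)%O.
Proof.
elim: p q => [|x p IH] [|y q] //= [/IH {}IH]; rewrite lexi_cons !ltxi_cons.
by case: (ltgtP x y) => //= _; exact: IH.
Qed.

Lemma seq_maximal (T : eqType) (lt : rel T) (s : seq T) x0 :
  irreflexive lt -> transitive lt -> x0 \in s ->
  exists2 x, x \in s & {in s, forall y, ~~ lt x y}.
Proof.
move=> lt_irr lt_trans; elim: s x0 => // x [|y s] IH _ _.
  by exists x; rewrite ?mem_head // => y; rewrite inE => /eqP->; rewrite lt_irr.
have [z zs zmax] := IH y (mem_head _ _).
have [lt_zx|nlt_zx] := boolP (lt z x).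
  exists x; first exact: mem_head.
  move=> w; rewrite inE => /predU1P[->|ws]; first by rewrite lt_irr.
  by apply: contra (zmax w ws); exact: lt_trans.
exists z; first by rewrite inE zs orbT.
by move=> w; rewrite inE => /predU1P[->//|]; exact: zmax.
Qed.

Lemma inj_surj_bij (T : choiceType) (U : eqType) (f : T -> U) :
  injective f -> (forall y, exists x, f x = y) -> bijective f.
Proof.
move=> f_inj f_surj; have f_surjb y : exists x, f x == y.
  by have [x <-] := f_surj y; exists x.
exists (fun y => xchoose (f_surjb y)) => [x|y].
  by apply: f_inj; exact: eqP (xchooseP (f_surjb (f x))).
exact: eqP (xchooseP (f_surjb y)).
Qed.

Lemma in_msuppD (R : nzRingType) (K : choiceType) (X Y : {malg R[K]}) v :
  v \in msupp (X + Y) -> v \in msupp X \/ v \in msupp Y.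
Proof. by move/(fsubsetP (msuppD_le _ _)); rewrite in_fsetU => /orP. Qed.

Lemma in_msuppU (R : nzRingType) (K : choiceType) (t v : K) :
  v \in msupp (<< t >> : {malg R[K]}) -> v = t.
Proof. by move/(fsubsetP msuppU_le); rewrite in_fset1 => /eqP. Qed.

Lemma in_msupp_subU (R : nzRingType) (K : choiceType) (X : {malg R[K]}) t v :
  v \in msupp X -> v = t \/ v \in msupp (X - << t >>).
Proof.
by rewrite -{1}(subrK << t >> X) => /in_msuppD [|/in_msuppU]; [right | left].
Qed.

Section LinearExtension.
Variables (R : nzRingType) (K : choiceType) (V : lmodType R).
Implicit Types (F G : K -> V) (X : {malg R[K]}).

Definition lext F X : V := \sum_(m <- msupp X) X@_m *: F m.

Lemma lextEw F (d : {fset K}) X : (msupp X `<=` d)%fset ->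
  lext F X = \sum_(m <- d) X@_m *: F m.
Proof.
move=> le_Xd; rewrite /lext (big_fset_incl _ le_Xd) //= => m _ /mcoeff_outdom ->.
by rewrite scale0r.
Qed.

Lemma lext_is_linear F : linear (lext F).
Proof.
move=> a X Y; pose d := (msupp X `|` msupp Y)%fset.
have le_aXY_d : (msupp (a *: X + Y) `<=` d)%fset.
  by apply: fsubset_trans (msuppD_le _ _) _; apply: fsetSU; exact: msuppZ_le.
rewrite (lextEw F (fsubsetUl (msupp X) (msupp Y))).
rewrite (lextEw F (fsubsetUr (msupp X) (msupp Y))) (lextEw F le_aXY_d).
rewrite scaler_sumr -big_split; apply: eq_bigr => m _ /=.
by rewrite mcoeffD mcoeffZ scalerDl scalerA.
Qed.

HB.instance Definition _ F :=
  GRing.isLinear.Build R {malg R[K]} V *:%R (lext F) (lext_is_linear F).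

Lemma lextU F m : lext F << m >> = F m.
Proof. by rewrite (lextEw F msuppU_le) big_seq_fset1 mcoeffUU scale1r. Qed.

Lemma eq_lext F G : F =1 G -> lext F =1 lext G.
Proof. by move=> eqFG X; apply: eq_bigr => m _; rewrite eqFG. Qed.

End LinearExtension.

Section LinearExtensionTheory.
Variables (R : nzRingType) (K : choiceType).
Implicit Types (X : {malg R[K]}).

Lemma linear_lext (V W : lmodType R) (L : {linear V -> W}) (G : K -> V) X :
  L (lext G X) = lext (L \o G) X.
Proof. by rewrite linear_sum; apply: eq_bigr => m _; rewrite linearZ. Qed.

Lemma lext_mkmalgU X : lext (fun m => << m >>) X = X.
Proof.
rewrite [RHS]monalgE; apply: eq_bigr => m _.
by apply/malgP => u; rewrite mcoeffZ !mcoeffU mulr_natr.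
Qed.

Lemma linear_lextE (W : lmodType R) (L : {linear {malg R[K]} -> W}) X :
  L X = lext (fun m => L << m >>) X.
Proof. by rewrite -{1}(lext_mkmalgU X) linear_lext. Qed.

End LinearExtensionTheory.

Section LinearExtensionSupport.
Variables (R : nzRingType) (K K' : choiceType) (G : K -> {malg R[K']}).
Implicit Types (X : {malg R[K]}).

Lemma msupp_lext X u :
  u \in msupp (lext G X) -> exists2 m, m \in msupp X & u \in msupp (G m).
Proof.
have [/hasP[m mX uGm] _|/hasPn noG] :=
  boolP (has (fun m => u \in msupp (G m)) (msupp X)); first by exists m.
rewrite -mcoeff_neq0 raddf_sum big1_seq ?eqxx //= => m /noG.
by rewrite mcoeffZ -mcoeff_eq0 => /eqP ->; rewrite mulr0.
Qed.

Lemma mcoeff_lext X u : (lext G X)@_u = \sum_(m <- msupp X) X@_m * (G m)@_u.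
Proof. by rewrite /lext raddf_sum; apply: eq_bigr => m _; exact: mcoeffZ. Qed.

Lemma lext_onto (Y : {malg R[K']}) :
  (forall u, u \in msupp Y -> exists X, lext G X = << u >>) ->
  exists X, lext G X = Y.
Proof.
move=> onto; suff /(_ (msupp Y)) [//|X eX] : forall r : seq K',
    {subset r <= msupp Y} -> exists X, lext G X = \sum_(u <- r) Y@_u *: << u >>.
  by exists X; rewrite eX; exact: lext_mkmalgU.
elim=> [|u r IH] sub_rY; first by exists 0; rewrite linear0 big_nil.
rewrite big_cons; have [Xu <-] := onto u (sub_rY u (mem_head _ _)).
have [Xr <-] := IH (fun v vr => sub_rY v (mem_behead (s := u :: r) vr)).
by exists (Y@_u *: Xu + Xr); rewrite linearP.
Qed.

End LinearExtensionSupport.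

Section Bilinear.
Variables (R : comNzRingType) (K1 K2 : choiceType) (V : lmodType R).
Implicit Types (X : {malg R[K1]}) (Y : {malg R[K2]}).

Lemma lext_swap (f : K1 -> K2 -> V) X Y :
  lext (fun s => lext (f s) Y) X = lext (fun t => lext (f^~ t) X) Y.
Proof.
rewrite /lext; under eq_bigr do rewrite scaler_sumr.
rewrite exchange_big /=; apply: eq_bigr => t _; rewrite scaler_sumr.
by apply: eq_bigr => s _; rewrite !scalerA mulrC.
Qed.

Variable f : K1 -> K2 -> V.

Lemma bilinE X Y : bilin f X Y = lext (fun s => lext (f s) Y) X.
Proof.
apply: eq_bigr => s _; rewrite scaler_sumr.
by apply: eq_bigr => t _; rewrite scalerA.
Qed.

Lemma bilinE_r X Y : bilin f X Y = lext (fun t => lext (f^~ t) X) Y.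
Proof. by rewrite bilinE lext_swap. Qed.

Lemma bilinU s t : bilin f << s >> << t >> = f s t.
Proof. by rewrite bilinE !lextU. Qed.

Lemma bilinDl X1 X2 Y : bilin f (X1 + X2) Y = bilin f X1 Y + bilin f X2 Y.
Proof. by rewrite !bilinE linearD. Qed.

Lemma bilinDr X Y1 Y2 : bilin f X (Y1 + Y2) = bilin f X Y1 + bilin f X Y2.
Proof. by rewrite !bilinE_r linearD. Qed.

Lemma bilin_lextl (K : choiceType) (G : K -> {malg R[K1]}) (Z : {malg R[K]}) Y :
  bilin f (lext G Z) Y = lext (fun s => bilin f (G s) Y) Z.
Proof. by rewrite bilinE linear_lext; apply: eq_lext => s; rewrite /= bilinE. Qed.

Lemma bilin_lextr (K : choiceType) (G : K -> {malg R[K2]}) X (Z : {malg R[K]}) :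
  bilin f X (lext G Z) = lext (fun t => bilin f X (G t)) Z.
Proof. by rewrite bilinE_r linear_lext; apply: eq_lext => t; rewrite /= bilinE_r. Qed.

End Bilinear.

Lemma msupp_bilin (R : comNzRingType) (K1 K2 K3 : choiceType)
    (f : K1 -> K2 -> {malg R[K3]}) X Y u :
  u \in msupp (bilin f X Y) ->
  exists s t, [/\ s \in msupp X, t \in msupp Y & u \in msupp (f s t)].
Proof. by rewrite bilinE => /msupp_lext[s sX] /msupp_lext[t tY]; exists s, t. Qed.

Section Trees.
Variables (R : comNzRingType) (A : countType).
Implicit Types (s t u v : ptree A).

Definition root_graft s t : ptree A := let: PNode a cs := t in PNode a (s :: cs).
Definition rdeg t : nat := let: PNode _ cs := t in size cs.

Lemma tsize_gt0 t : (0 < tsize t)%N.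
Proof. by case: t. Qed.

Lemma rdeg_lt_tsize t : (rdeg t < tsize t)%N.
Proof.
case: t => a cs /=; rewrite ltnS.
by elim: cs => //= c cs IH; have := tsize_gt0 c; lia.
Qed.

Lemma tsize_tdiam s t : tsize (tdiam s t) = (tsize s + tsize t)%N.
Proof. by case: t => a cs /=; rewrite map_rcons sumn_rcons addnC addnS. Qed.

Lemma rdeg_tdiam s t : rdeg (tdiam s t) = (rdeg t).+1.
Proof. by case: t => a cs /=; rewrite size_rcons. Qed.

Lemma tsize_root_graft s t : tsize (root_graft s t) = (tsize s + tsize t)%N.
Proof. by case: t => a cs /=; rewrite addnS. Qed.

Lemma rdeg_root_graft s t : rdeg (root_graft s t) = (rdeg t).+1.
Proof. by case: t. Qed.

Lemma root_graft_inj s t s' t' :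
  root_graft s t = root_graft s' t' -> s = s' /\ t = t'.
Proof. by case: t t' => a cs [b ds] [-> -> ->]. Qed.

Lemma root_graft_tdiam s c r : root_graft s (tdiam c r) = tdiam c (root_graft s r).
Proof. by case: r. Qed.

Lemma tdiam_last_belast (a : A) x xs :
  PNode a (x :: xs) = tdiam (last x xs) (PNode a (belast x xs)).
Proof. by rewrite /= -lastI. Qed.

Definition tree_weight t := (tsize t * tsize t + rdeg t)%N.

Lemma tree_weight_lt u v : (tsize u < tsize v)%N -> (tree_weight u < tree_weight v)%N.
Proof. by rewrite /tree_weight => lt_uv; have := rdeg_lt_tsize u; nia. Qed.

Lemma msupp_diam (X Y : Tpl R A) u : u \in msupp (diam X Y) ->
  exists v w, [/\ v \in msupp X, w \in msupp Y & u = tdiam v w].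
Proof. by move/msupp_bilin => [v [w [vX wY /in_msuppU ->]]]; exists v, w. Qed.

(* The leading term of tau ~> rho is root_graft tau rho: grafting onto any
   vertex other than the root leaves the root degree unchanged. *)
Lemma graft_fuel_lead n s t u : (tsize t <= n)%N ->
  u \in msupp (graft_fuel R n s t - << root_graft s t >>) ->
  tsize u = (tsize s + tsize t)%N /\ rdeg u = rdeg t.
Proof.
elim: n s t u => [|n IH] s t u; first by rewrite leqn0 (gtn_eqF (tsize_gt0 t)).
case: t => a [|x xs] le_tn; first by rewrite /= subrr msupp0 inE.
have -> : graft_fuel R n.+1 s (PNode a (x :: xs)) =
  diam (graft_fuel R n s (last x xs)) << PNode a (belast x xs) >>
  + diam << last x xs >> (graft_fuel R n s (PNode a (belast x xs))) by [].
move: le_tn; rewrite tdiam_last_belast.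
move: (last x xs) (PNode a (belast x xs)) => c r.
rewrite tsize_tdiam rdeg_tdiam root_graft_tdiam => le_crn.
have le_cn : (tsize c <= n)%N by have := tsize_gt0 r; lia.
have le_rn : (tsize r <= n)%N by have := tsize_gt0 c; lia.
rewrite -[graft_fuel R n s r](subrK << root_graft s r >>) /diam bilinDr bilinU.
rewrite addrA addrK => /in_msuppD [] /msupp_diam [v [w [vX wY ->]]].
- rewrite (in_msuppU wY) tsize_tdiam rdeg_tdiam.
  case: (in_msupp_subU (root_graft s c) vX) => [->|/(IH _ _ _ le_cn) [-> _]].
    by rewrite tsize_root_graft; lia.
  by lia.
- rewrite (in_msuppU vX) tsize_tdiam rdeg_tdiam.
  by have [-> ->] := IH _ _ _ le_rn wY; lia.
Qed.

Lemma graft_tree_lead s t u :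
  u \in msupp (graft_tree R s t - << root_graft s t >>) ->
  tsize u = (tsize s + tsize t)%N /\ rdeg u = rdeg t.
Proof. exact: graft_fuel_lead. Qed.

End Trees.

Section ShapeOrder.
Variable A : countType.
Implicit Types (s t u v : ptree A).
Local Open Scope order_scope.

Fixpoint dword t : seqlexi nat :=
  let: PNode _ cs := t in rdeg t :: flatten (map dword cs).

Lemma size_dword t : size (dword t) = tsize t.
Proof.
move: t; fix size_dword 1 => -[a cs] /=; congr S.
rewrite size_flatten /shape -map_comp.
by elim: cs => //= c cs ->; rewrite size_dword.
Qed.

Definition shape_lt u v := (tsize u == tsize v)%N && (dword u < dword v).
Definition shape_le u v := (tsize u == tsize v)%N && (dword u <= dword v).

Lemma shape_lt_irr : irreflexive shape_lt.
Proof. by move=> u; rewrite /shape_lt ltxx andbF. Qed.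

Lemma shape_lt_trans : transitive shape_lt.
Proof.
move=> v u w /andP[/eqP eq_uv lt_uv] /andP[eq_vw lt_vw].
by rewrite /shape_lt eq_uv eq_vw (lt_trans lt_uv lt_vw).
Qed.

Lemma shape_le_refl : reflexive shape_le.
Proof. by move=> u; rewrite /shape_le eqxx lexx. Qed.

Lemma shape_ltW u v : shape_lt u v -> shape_le u v.
Proof. by rewrite /shape_lt /shape_le => /andP[-> /ltW]. Qed.

Lemma shape_le_rdeg u v : shape_le u v -> (rdeg u <= rdeg v)%N.
Proof. by case: u v => [a cs] [b ds] /andP[_ /lexi_lehead]. Qed.

Lemma shape_lt_rdeg u v :
  tsize u = tsize v -> (rdeg u < rdeg v)%N -> shape_lt u v.
Proof.
case: u v => [a cs] [b ds] eq_uv lt_cd; rewrite /shape_lt eq_uv eqxx /= ltxi_cons.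
by rewrite !leEnat (ltnW lt_cd) leqNgt lt_cd.
Qed.

Lemma shape_lt_root_graft a a' b b' :
  shape_le a a' -> shape_le b b' -> shape_lt a a' || shape_lt b b' ->
  shape_lt (root_graft a b) (root_graft a' b').
Proof.
case: b b' => [x cs] [y ds] /andP[/eqP ea le_aa'] /andP[/eqP eb le_bb'] lt_ab.
rewrite /shape_lt !tsize_root_graft ea eb eqxx /= ltxi_cons !leEnat !ltnS.
move: le_bb' lt_ab; rewrite /shape_lt ea eb !eqxx /= lexi_cons ltxi_cons !leEnat.
case: (ltngtP (size cs) (size ds)) => //= _ le_W lt_W.
by apply: ltxi_cat; rewrite ?size_dword.
Qed.

End ShapeOrder.

Section Phi.
Variables (R : comNzRingType) (A : countType).
Implicit Types (s t u : ptree A) (m : magma A).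

Fixpoint lead_tree m : ptree A :=
  match m with
  | MGen a => PNode a [::]
  | MProd m1 m2 => root_graft (lead_tree m1) (lead_tree m2)
  end.

Lemma lead_tree_inj : injective lead_tree.
Proof.
elim=> [a|m1 IH1 m2 IH2] [b|n1 n2] /=.
- by case=> ->.
- by case: (lead_tree n2).
- by case: (lead_tree m2).
- by case/root_graft_inj=> /IH1 -> /IH2 ->.
Qed.

Fixpoint phi_mag m : Tpl R A :=
  match m with
  | MGen a => << PNode a [::] >>
  | MProd m1 m2 => graft (phi_mag m1) (phi_mag m2)
  end.

Lemma msupp_graft_tree_lead a b u :
  u \in msupp (graft_tree R a b - << root_graft a b >>) ->
  shape_lt u (root_graft a b).
Proof.
case/graft_tree_lead=> eq_u eq_rdeg; apply: shape_lt_rdeg.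
  by rewrite eq_u tsize_root_graft.
by rewrite eq_rdeg rdeg_root_graft.
Qed.

Lemma msupp_graft_tree a a' b b' u :
  shape_le a a' -> shape_le b b' -> shape_lt a a' || shape_lt b b' ->
  u \in msupp (graft_tree R a b) -> shape_lt u (root_graft a' b').
Proof.
move=> le_aa' le_bb' lt_ab /(in_msupp_subU (root_graft a b)) [->|].
  exact: shape_lt_root_graft.
case/graft_tree_lead=> eq_u eq_rdeg; apply: shape_lt_rdeg.
  rewrite eq_u !tsize_root_graft.
  by case/andP: le_aa' => /eqP -> _; case/andP: (le_bb') => /eqP -> _.
by rewrite eq_rdeg rdeg_root_graft ltnS (shape_le_rdeg le_bb').
Qed.

Lemma phi_mag_lead m u :
  u \in msupp (phi_mag m - << lead_tree m >>) -> shape_lt u (lead_tree m).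
Proof.
elim: m u => [a|m1 IH1 m2 IH2] u /=; first by rewrite subrr msupp0.
rewrite -[phi_mag m1](subrK << lead_tree m1 >>) -[phi_mag m2](subrK << lead_tree m2 >>).
move: (phi_mag m1 - _) (phi_mag m2 - _) IH1 IH2 => R1 R2 lt_R1 lt_R2.
rewrite /graft bilinDl !bilinDr bilinU -!addrA.
case/in_msuppD=> [|/in_msuppD [|/in_msuppD []]]; last exact: msupp_graft_tree_lead.
- move=> /msupp_bilin [a [b [/lt_R1 lt_a /lt_R2 lt_b]]].
  by apply: msupp_graft_tree; rewrite ?(shape_ltW lt_a) ?(shape_ltW lt_b) ?lt_a.
- move=> /msupp_bilin [a [b [/lt_R1 lt_a /in_msuppU ->]]].
  by apply: msupp_graft_tree; rewrite ?shape_le_refl ?(shape_ltW lt_a) ?lt_a.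
- move=> /msupp_bilin [a [b [/in_msuppU -> /lt_R2 lt_b]]].
  by apply: msupp_graft_tree; rewrite ?shape_le_refl ?(shape_ltW lt_b) ?lt_b ?orbT.
Qed.

Lemma phi_mag_coef m : (phi_mag m)@_(lead_tree m) = 1.
Proof.
rewrite -[phi_mag m](subrK << lead_tree m >>) mcoeffD mcoeffUU mcoeff_outdom ?add0r //.
by apply/negP => /phi_mag_lead; rewrite shape_lt_irr.
Qed.

Lemma phi_mag_coef_eq0 m m' :
  m != m' -> ~~ shape_lt (lead_tree m) (lead_tree m') ->
  (phi_mag m')@_(lead_tree m) = 0.
Proof.
move=> neq_mm' nlt; rewrite -[phi_mag m'](subrK << lead_tree m' >>) mcoeffD mcoeffU.
rewrite (inj_eq lead_tree_inj) eq_sym (negbTE neq_mm') mulr0n addr0.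
by rewrite mcoeff_outdom //; exact: contra (@phi_mag_lead m' _) nlt.
Qed.

(* Triangularity: the coefficient of the leading tree of a shape-maximal
   magma element of the support of X is its coefficient in X. *)
Lemma lext_phi_mag_inj : injective (lext phi_mag).
Proof.
apply: raddf_inj => X phiX0; apply/eqP/contraT => nX0.
have /fset0Pn [m0 m0X] : msupp X != fset0.
  apply: contra nX0 => /eqP X0; apply/eqP/malgP => m.
  by rewrite mcoeff0 mcoeff_outdom // X0.
pose lt_lead := [rel m m' | shape_lt (lead_tree m) (lead_tree m')].
have lt_lead_irr : irreflexive lt_lead by move=> m; exact: shape_lt_irr.
have lt_lead_trans : transitive lt_lead by move=> ? ? ?; exact: shape_lt_trans.
have [m mX mmax] := seq_maximal lt_lead_irr lt_lead_trans m0X.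
move: (congr1 (mcoeff (lead_tree m)) phiX0); rewrite mcoeff0 mcoeff_lext.
rewrite (big_fsetD1 m) //= phi_mag_coef mulr1 big1_fset ?addr0 => [/eqP|m'].
  by rewrite mcoeff_eq0 mX.
rewrite in_fsetD1 => /andP[neq_m'm m'X] _.
by rewrite phi_mag_coef_eq0 ?mulr0 // ?mmax // eq_sym.
Qed.

Lemma lext_phi_mag_morph (X Y : Mag R A) :
  lext phi_mag (mag_prod X Y) = graft (lext phi_mag X) (lext phi_mag Y).
Proof.
rewrite /mag_prod bilinE linear_lext /graft bilin_lextl; apply: eq_lext => m1 /=.
rewrite linear_lext bilin_lextr; apply: eq_lext => m2 /=.
exact: lextU.
Qed.

(* Induction on tree_weight: with t = root_graft c r, the trees c and r are
   smaller, and the non-leading terms of graft_tree c r have the size of t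
   but a smaller root degree. *)
Lemma phi_mag_onto_tree t : exists X, lext phi_mag X = << t >>.
Proof.
move: {2}(tree_weight t).+1 (ltnSn (tree_weight t)) => n.
elim: n t => // n IH [a [|c cs]] lt_tn; first by exists << MGen a >>; rewrite lextU.
move: lt_tn; rewrite -[PNode a (c :: cs)]/(root_graft c (PNode a cs)) ltnS.
move: (PNode a cs) => {a cs} r le_tn.
have lt_weight u : (tsize u < tsize (root_graft c r))%N -> (tree_weight u < n)%N.
  by move/tree_weight_lt/leq_trans; apply.
have [Xc phiXc] : exists X, lext phi_mag X = << c >>.
  by apply/IH/lt_weight; rewrite tsize_root_graft; have := tsize_gt0 r; lia.
have [Xr phiXr] : exists X, lext phi_mag X = << r >>.
  by apply/IH/lt_weight; rewrite tsize_root_graft; have := tsize_gt0 c; lia.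
have [Z phiZ] : exists Z, lext phi_mag Z = graft_tree R c r - << root_graft c r >>.
  apply: lext_onto => u /graft_tree_lead [eq_u eq_rdeg]; apply: IH.
  apply: leq_trans le_tn; rewrite /tree_weight eq_u eq_rdeg.
  by rewrite tsize_root_graft rdeg_root_graft; lia.
exists (mag_prod Xc Xr - Z).
by rewrite linearB /= lext_phi_mag_morph phiXc phiXr phiZ /graft bilinU opprB addrC subrK.
Qed.

Lemma lext_phi_mag_surj (Y : Tpl R A) : exists X, lext phi_mag X = Y.
Proof. by apply: lext_onto => t _; exact: phi_mag_onto_tree. Qed.

Lemma magma_morph_phi_mag (phi : {linear Mag R A -> Tpl R A}) :
  (forall a : A, phi << MGen a >> = << PNode a [::] >>) ->
  (forall x y : Mag R A, phi (mag_prod x y) = graft (phi x) (phi y)) ->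
  phi =1 lext phi_mag.
Proof.
move=> phi_gen phi_prod X; rewrite linear_lextE; apply: eq_lext.
elim=> [a|m1 IH1 m2 IH2] /=; first exact: phi_gen.
by rewrite -[<< _ >>](bilinU (fun m1 m2 => << MProd m1 m2 >>)) phi_prod IH1 IH2.
Qed.

End Phi.

Theorem lemma2p10 (k : fieldType) (A : finType) (char0 : [pchar k] =i pred0) :
  (exists phi : {linear Mag k A -> Tpl k A},
      (forall a : A, phi << MGen a >> = << PNode a [::] >>) /\
      (forall x y : Mag k A, phi (mag_prod x y) = graft (phi x) (phi y))) /\
  (forall phi : {linear Mag k A -> Tpl k A},
      (forall a : A, phi << MGen a >> = << PNode a [::] >>) ->
      (forall x y : Mag k A, phi (mag_prod x y) = graft (phi x) (phi y)) ->
      bijective phi).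
Proof.
split.
  exists (lext (@phi_mag k A) : {linear _ -> _}).
  by split=> [a|x y]; [exact: lextU | exact: lext_phi_mag_morph].
move=> phi phi_gen phi_prod.
apply: (@eq_bij _ _ (lext (@phi_mag k A))) => [|X]; last first.
  by rewrite (magma_morph_phi_mag phi_gen phi_prod).
exact: inj_surj_bij (@lext_phi_mag_inj k A) (@lext_phi_mag_surj k A).
Qed.
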